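(* Let $\Gamma$ be a temporal theory, let $M=((W,\preccurlyeq,S),V)$ be a total THT model, and let $T=\{\circ^ip\mid p\in V((i,0)),\ i\ge 0\}\subseteq\mathbb{P}^{\circ}$ (so that $V((i,0))=V((i,1))=\{p\mid \circ^ip\in T\}$ for all $i\ge0$). Then $M$ is a temporal equilibrium model of $\Gamma$ if and only if $T$ is a $\mathrm{THT}$-temporal safe belief set of $\Gamma$.
   Context: Fix a countable set $\mathbb{P}$ of atoms. Temporal formulas: $\varphi ::= p\mid\bot\mid\varphi\wedge\varphi\mid\varphi\vee\varphi\mid\varphi\to\varphi\mid\circ\varphi\mid\varphi\,\mathsf{U}\,\varphi\mid\varphi\,\mathsf{R}\,\varphi$; $\neg\varphi:=\varphi\to\bot$, $\circ^0\varphi:=\varphi$, $\circ^{i+1}\varphi:=\circ\circ^i\varphi$. The THT frame is $W=\mathbb{N}\times\{0,1\}$, $(i,h)\preccurlyeq(j,t)$ iff $i=j$ and $h\le t$, $S((i,k))=(i+1,k)$. A THT model is $((W,\preccurlyeq,S),V)$ with $V:W\to2^{\mathbb{P}}$ and $V((i,0))\subseteq V((i,1))$. Satisfaction: $M,w\models p$ iff $p\in V(w)$; $\bot$ never; $\wedge,\vee$ pointwise; $M,w\models\varphi\to\psi$ iff for all $v\succcurlyeq w$, $M,v\models\varphi$ implies $M,v\models\psi$; $M,w\models\circ\varphi$ iff $M,S(w)\models\varphi$; $\varphi\,\mathsf{U}\,\psi$: some $k\ge0$ with $M,S^k(w)\models\psi$ and $M,S^i(w)\models\varphi$ for all $0\le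 i<k$; $\varphi\,\mathsf{R}\,\psi$: for all $k\ge0$, $M,S^k(w)\models\psi$ or $M,S^i(w)\models\varphi$ for some $0\le i<k$. $M$ is total if $V((i,0))=V((i,1))$ for all $i$. For THT models $M'=(\cdot,V')$, $M=(\cdot,V)$: $M'\le M$ iff $V'((i,1))=V((i,1))$ and $V'((i,0))\subseteq V((i,0))$ for all $i$; $M'<M$ iff $M'\le M$ and $V'\neq V$. A temporal equilibrium model of a theory $\Gamma$ is a total THT model $M$ with $M,(0,0)\models\Gamma$ such that no THT model $M'<M$ has $M',(0,0)\models\Gamma$. $\Gamma$ is THT-consistent if some THT model satisfies all of $\Gamma$ at some world; $\Gamma\models_{\mathrm{THT}}\Delta$ means every THT model and world satisfying all of $\Gamma$ satisfies all of $\Delta$. $\mathbb{P}^{\circ}:=\{\circ^ip\mid p\in\mathbb{P},i\ge0\}$. $T\subseteq\mathbb{P}^{\circ}$ is a THT-temporal safe belief set of $\Gamma$ if $\Sigma_T:=\Gamma\cup\{\circ^i\neg\neg p\mid \circ^ip\in T\}\cup\{\circ^i\neg p\mid\circ^ip\notin T\}$ is THT-consistent and $\Sigma_T\models_{\mathrm{THT}}T$. *)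

From Stdlib Require Import Arith.
Set Implicit Arguments.

Section THT.
Variable P : Type.

Inductive tformula : Type :=
| TAtom : P -> tformula
| TBot : tformula
| TAnd : tformula -> tformula -> tformula
| TOr : tformula -> tformula -> tformula
| TImp : tformula -> tformula -> tformula
| TNext : tformula -> tformula
| TUntil : tformula -> tformula -> tformula
| TRelease : tformula -> tformula -> tformula.

Definition TNeg (f : tformula) : tformula := TImp f TBot.

Fixpoint TNextN (i : nat) (f : tformula) : tformula :=
  match i with 0 => f | S j => TNext (TNextN j f) end.

(* Worlds W = N x {0,1}, with 0 = false ("here"), 1 = true ("there"). *)
Definition world := (nat * bool)%type.

Definition wle (w v : world) : Prop := fst w = fst v /\ implb (snd w) (snd v) = true.

Definition succ (w : world) : world := (S (fst w), snd w).

Definition succN (k : nat) (w : world) : world := Nat.iter k succ w.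

Definition valuation := world -> P -> Prop.

Definition is_THT (V : valuation) : Prop :=
  forall i p, V (i, false) p -> V (i, true) p.

Definition total (V : valuation) : Prop :=
  forall i p, V (i, false) p <-> V (i, true) p.

Fixpoint sat (V : valuation) (w : world) (f : tformula) : Prop :=
  match f with
  | TAtom p => V w p
  | TBot => False
  | TAnd a b => sat V w a /\ sat V w b
  | TOr a b => sat V w a \/ sat V w b
  | TImp a b => forall v, wle w v -> sat V v a -> sat V v b
  | TNext a => sat V (succ w) a
  | TUntil a b => exists k, sat V (succN k w) b /\
                            forall i, i < k -> sat V (succN i w) a
  | TRelease a b => forall k, sat V (succN k w) b \/
                              exists i, i < k /\ sat V (succN i w) a
  end.

Definition theory := tformula -> Prop.

Definition sat_theory (V : valuation) (w : world) (G : theory) : Prop :=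
  forall f, G f -> sat V w f.

Definition THT_consistent (G : theory) : Prop :=
  exists V w, is_THT V /\ sat_theory V w G.

Definition THT_entails (G D : theory) : Prop :=
  forall V w, is_THT V -> sat_theory V w G -> sat_theory V w D.

Definition model_le (V' V : valuation) : Prop :=
  (forall i p, V' (i, true) p <-> V (i, true) p) /\
  (forall i p, V' (i, false) p -> V (i, false) p).

Definition model_lt (V' V : valuation) : Prop :=
  model_le V' V /\ exists w p, ~ (V' w p <-> V w p).

Definition temporal_equilibrium_model (G : theory) (V : valuation) : Prop :=
  is_THT V /\ total V /\ sat_theory V (0, false) G /\
  ~ (exists V', is_THT V' /\ model_lt V' V /\ sat_theory V' (0, false) G).

(* Subsets T of P^circ = { circ^i p }, encoded by the pair (i, p). *)
Definition pcirc_set := nat -> P -> Prop.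

Definition pcirc_theory (T : pcirc_set) : theory :=
  fun f => exists i p, T i p /\ f = TNextN i (TAtom p).

Definition Sigma_T (G : theory) (T : pcirc_set) : theory :=
  fun f => G f
    \/ (exists i p, T i p /\ f = TNextN i (TNeg (TNeg (TAtom p))))
    \/ (exists i p, ~ T i p /\ f = TNextN i (TNeg (TAtom p))).

Definition THT_temporal_safe_belief_set (G : theory) (T : pcirc_set) : Prop :=
  THT_consistent (Sigma_T G T) /\ THT_entails (Sigma_T G T) (pcirc_theory T).

End THT.

(* Satisfaction in THT is invariant under bisimulations of models; this gives
   invariance under time shifts, the fact that "there" worlds only see the
   "there" valuation, and the collapse of "here" and "there" in total models.
   The literals ¬¬∘^i p and ¬∘^i p of Σ_T pin the "there" row of any model of
   Σ_T, read from its evaluation world, to T. Hence the models of Σ_T are, up to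
   a shift, the models M' ≤ M of Γ, and Σ_T entails T exactly when each such M'
   also has the full "here" row of M, i.e. equals M: minimality of M. *)
From Stdlib Require Import Arith Setoid Classical.

Set Implicit Arguments.

Section THTSemantics.
Variable P : Type.

Lemma wle_trans (u v w : world) : wle u v -> wle v w -> wle u w.
Proof.
  destruct u as [a []], v as [b []], w as [c []]; unfold wle; simpl;
    intros [Hab Huv] [Hbc Hvw]; split; congruence.
Qed.

Lemma wle_here_there (n : nat) (b : bool) : wle (n, b) (n, true).
Proof. split; [reflexivity | destruct b; reflexivity]. Qed.

Lemma wle_succN (k : nat) (w v : world) : wle w v -> wle (succN k w) (succN k v).
Proof.
  intros Hwv; induction k as [|k [Hfst Hsnd]]; [exact Hwv|].
  split; simpl; congruence.
Qed.

Lemma sat_TNextN (V : valuation P) (i n : nat) (b : bool) (f : tformula P) :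
  sat V (n, b) (TNextN i f) <-> sat V (n + i, b) f.
Proof.
  revert n; induction i as [|i IH]; intros n.
  - now rewrite Nat.add_0_r.
  - simpl; unfold succ; simpl.
    now rewrite IH, Nat.add_succ_r.
Qed.

Section Bisimulation.
Variables (V1 V2 : valuation P) (R : world -> world -> Prop).
Hypothesis bisim_atom : forall w v p, R w v -> (V1 w p <-> V2 v p).
Hypothesis bisim_succ : forall w v, R w v -> R (succ w) (succ v).
Hypothesis bisim_forth :
  forall w v w', R w v -> wle w w' -> exists v', wle v v' /\ R w' v'.
Hypothesis bisim_back :
  forall w v v', R w v -> wle v v' -> exists w', wle w w' /\ R w' v'.

Lemma bisim_succN (k : nat) (w v : world) : R w v -> R (succN k w) (succN k v).
Proof. intros Hwv; induction k; simpl; auto. Qed.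

Lemma sat_bisim (f : tformula P) :
  forall w v, R w v -> (sat V1 w f <-> sat V2 v f).
Proof.
  induction f as [p| |f1 IH1 f2 IH2|f1 IH1 f2 IH2|f1 IH1 f2 IH2|f IH
                 |f1 IH1 f2 IH2|f1 IH1 f2 IH2];
    intros w v Hwv; simpl.
  - now apply bisim_atom.
  - reflexivity.
  - now rewrite (IH1 w v), (IH2 w v).
  - now rewrite (IH1 w v), (IH2 w v).
  - split.
    + intros H v' Hvv' H1.
      destruct (bisim_back Hwv Hvv') as [w' [Hww' Hw'v']].
      apply (IH2 _ _ Hw'v'), H, (IH1 _ _ Hw'v'); assumption.
    + intros H w' Hww' H1.
      destruct (bisim_forth Hwv Hww') as [v' [Hvv' Hw'v']].
      apply (IH2 _ _ Hw'v'), H, (IH1 _ _ Hw'v'); assumption.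
  - now apply IH, bisim_succ.
  - setoid_rewrite (fun k => IH1 _ _ (bisim_succN k Hwv)).
    setoid_rewrite (fun k => IH2 _ _ (bisim_succN k Hwv)).
    reflexivity.
  - setoid_rewrite (fun k => IH1 _ _ (bisim_succN k Hwv)).
    setoid_rewrite (fun k => IH2 _ _ (bisim_succN k Hwv)).
    reflexivity.
Qed.

End Bisimulation.

Definition shiftV (V : valuation P) (j : nat) : valuation P :=
  fun w p => V (j + fst w, snd w) p.

Lemma sat_shiftV (V : valuation P) (j a : nat) (b : bool) (f : tformula P) :
  sat (shiftV V j) (a, b) f <-> sat V (j + a, b) f.
Proof.
  apply (sat_bisim (shiftV V j) V (fun w v => v = (j + fst w, snd w))); trivial.
  - intros w v p ->; reflexivity.
  - intros [a' b'] v ->; unfold succ; simpl; now rewrite Nat.add_succ_r.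
  - intros [a' b'] v [c d] -> [Hac Hbd]; simpl in *; subst c.
    exists (j + a', d); split; [split|]; auto.
  - intros [a' b'] v [c d] -> [Hac Hbd]; simpl in *; subst c.
    exists (a', d); split; [split|]; auto.
Qed.

Lemma sat_there_congr (V1 V2 : valuation P) (f : tformula P) (n : nat) :
  (forall i p, V1 (i, true) p <-> V2 (i, true) p) ->
  (sat V1 (n, true) f <-> sat V2 (n, true) f).
Proof.
  intros Hthere.
  apply (sat_bisim V1 V2 (fun w v => v = w /\ snd w = true)); [| | | |now split].
  - intros [i b] v p [-> Hb]; simpl in Hb; subst b; apply Hthere.
  - intros w v [-> Hw]; now split.
  - intros [i b] v w' [-> Hb] [Hfst Hsnd]; simpl in *; subst b.
    exists w'; repeat split; auto.
  - intros [i b] v v' [-> Hb] [Hfst Hsnd]; simpl in *; subst b.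
    exists v'; repeat split; auto.
Qed.

Lemma sat_total_here_there (V : valuation P) (f : tformula P) (n : nat) :
  total V -> (sat V (n, false) f <-> sat V (n, true) f).
Proof.
  intros Htot.
  apply (sat_bisim V V (fun w v => fst w = fst v)); [| | | |reflexivity].
  - intros [i [|]] [k [|]] p Hik; simpl in Hik; subst k;
      first [reflexivity | apply Htot | symmetry; apply Htot].
  - intros w v Hwv; unfold succ; simpl; congruence.
  - intros w v w' Hwv [Hfst _]; exists (fst w', true).
    split; [split|]; simpl; auto; [congruence | now destruct (snd v)].
  - intros w v v' Hwv [Hfst _]; exists (fst v', true).
    split; [split|]; simpl; auto; [congruence | now destruct (snd w)].
Qed.

Lemma sat_persistent (V : valuation P) (f : tformula P) :
  is_THT V -> forall w v, wle w v -> sat V w f -> sat V v f.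
Proof.
  intros HT.
  induction f as [p| |f1 IH1 f2 IH2|f1 IH1 f2 IH2|f1 IH1 f2 IH2|f IH
                 |f1 IH1 f2 IH2|f1 IH1 f2 IH2];
    intros w v Hwv; simpl.
  - destruct w as [a []], v as [c []], Hwv as [Hac Hbd]; simpl in *;
      subst c; try discriminate; auto.
  - trivial.
  - intros [H1 H2]; split; eauto.
  - intros [H1|H2]; [left|right]; eauto.
  - intros H u Hvu; apply H; eapply wle_trans; eassumption.
  - apply IH; destruct Hwv as [Hfst Hsnd]; split; simpl; congruence.
  - intros [k [H2 H1]]; exists k; split.
    + eapply IH2; [apply wle_succN, Hwv | exact H2].
    + intros i Hi; eapply IH1; [apply wle_succN, Hwv | exact (H1 i Hi)].
  - intros H k; destruct (H k) as [H2|[i [Hi H1]]].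
    + left; eapply IH2; [apply wle_succN, Hwv | exact H2].
    + right; exists i; split; [exact Hi|].
      eapply IH1; [apply wle_succN, Hwv | exact H1].
Qed.

Lemma sat_TNeg_atom (V : valuation P) (n : nat) (b : bool) (p : P) :
  is_THT V -> (sat V (n, b) (TNeg (TAtom p)) <-> ~ V (n, true) p).
Proof.
  intros HT; simpl; split.
  - intros H; exact (H _ (wle_here_there n b)).
  - intros Hp [c d] [Hc _] Hv; simpl in Hc; subst c.
    destruct d; auto.
Qed.

Lemma sat_TNegNeg_atom (V : valuation P) (n : nat) (b : bool) (p : P) :
  sat V (n, b) (TNeg (TNeg (TAtom p))) <-> V (n, true) p.
Proof.
  simpl; split.
  - intros H; apply NNPP; intros Hp.
    apply (H _ (wle_here_there n b)).
    intros [c d] [Hc Hd] Hv; simpl in *; subst c; destruct d; auto; discriminate.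
  - intros Hp [c d] [Hc _] H; simpl in Hc; subst c.
    exact (H _ (wle_here_there n d) Hp).
Qed.

Lemma sat_Sigma_T (G : theory P) (T : pcirc_set P) (V : valuation P)
  (j : nat) (h : bool) :
  is_THT V ->
  (sat_theory V (j, h) (Sigma_T G T) <->
   sat_theory V (j, h) G /\ forall i p, V (j + i, true) p <-> T i p).
Proof.
  intros HT; split.
  - intros HS; split; [intros f Hf; apply HS; now left|].
    intros i p; split.
    + intros Hp; apply NNPP; intros HnT.
      assert (Hneg := HS (TNextN i (TNeg (TAtom p)))).
      rewrite sat_TNextN, sat_TNeg_atom in Hneg; auto.
      apply Hneg; [right; right; now exists i, p | exact Hp].
    + intros HTp.
      apply (sat_TNegNeg_atom V (j + i) h), sat_TNextN, HS.
      right; left; now exists i, p.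
  - intros [HG Hrow] f [Hf|[[i [p [HTp ->]]]|[i [p [HnT ->]]]]].
    + now apply HG.
    + now rewrite sat_TNextN, sat_TNegNeg_atom, Hrow.
    + now rewrite sat_TNextN, sat_TNeg_atom, Hrow.
Qed.

Lemma model_lt_here (V' V : valuation P) :
  model_le V' V ->
  (model_lt V' V <-> exists i p, V (i, false) p /\ ~ V' (i, false) p).
Proof.
  intros [Hthere Hhere]; split.
  - intros [_ [[i []] [p Hne]]]; [now destruct Hne|].
    exists i, p; specialize (Hhere i p).
    destruct (classic (V (i, false) p)); tauto.
  - intros [i [p [HV HnV']]]; split; [now split|].
    exists (i, false), p; tauto.
Qed.

Lemma model_le_shiftV (V V' : valuation P) (j : nat) :
  total V -> is_THT V' ->
  (forall i p, V' (j + i, true) p <-> V (i, false) p) ->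
  model_le (shiftV V' j) V.
Proof.
  intros Htot HT' Hrow; split; unfold shiftV; simpl.
  - intros i p; rewrite Hrow; apply Htot.
  - intros i p Hp; now apply Hrow, HT'.
Qed.

Lemma equilibrium_safe_belief_set (G : theory P) (V : valuation P) :
  temporal_equilibrium_model G V ->
  THT_temporal_safe_belief_set G (fun i p => V (i, false) p).
Proof.
  intros [HT [Htot [HG Hmin]]]; split.
  - exists V, (0, false); split; [exact HT|].
    apply sat_Sigma_T; [exact HT|]; split; [exact HG|].
    intros i p; symmetry; apply Htot.
  - intros V' [j h] HT' HS f [i [p [HVp ->]]].
    apply sat_Sigma_T in HS as [HG' Hrow]; [|exact HT'].
    rewrite sat_TNextN; destruct h; [now apply Hrow|].
    apply NNPP; intros HnV'.
    apply Hmin; exists (shiftV V' j); split; [intros ? ?; apply HT'|]; split.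
    + apply model_lt_here; [apply model_le_shiftV; auto|].
      now exists i, p.
    + intros g Hg; apply sat_shiftV; rewrite Nat.add_0_r; exact (HG' g Hg).
Qed.

Lemma safe_belief_set_equilibrium (G : theory P) (V : valuation P) :
  total V ->
  THT_temporal_safe_belief_set G (fun i p => V (i, false) p) ->
  temporal_equilibrium_model G V.
Proof.
  intros Htot [[V' [[j h] [HT' HS]]] Hent].
  apply sat_Sigma_T in HS as [HG' Hrow]; [|exact HT'].
  split; [intros i p; apply Htot|]; split; [exact Htot|]; split.
  - intros g Hg.
    apply sat_total_here_there; [exact Htot|].
    apply (sat_there_congr (shiftV V' j) V); [apply model_le_shiftV; auto|].
    apply sat_shiftV; rewrite Nat.add_0_r.
    exact (sat_persistent g HT' (wle_here_there j h) (HG' g Hg)).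
  - intros [V'' [HT'' [Hlt HG'']]].
    pose proof (proj1 Hlt) as Hle.
    apply model_lt_here in Hlt as [i [p [HVp HnV'']]]; [|exact Hle].
    apply HnV''.
    refine (proj1 (sat_TNextN V'' i 0 false (TAtom p)) (Hent V'' _ HT'' _ _ _)).
    + apply sat_Sigma_T; [exact HT''|]; split; [exact HG''|].
      intros k q; rewrite (proj1 Hle); symmetry; apply Htot.
    + now exists i, p.
Qed.

End THTSemantics.

Theorem proposition5p3 (P : Type) (P_countable : exists f : P -> nat, forall x y, f x = f y -> x = y)
  (G : theory P) (V : valuation P) :
  is_THT V -> total V ->
  (temporal_equilibrium_model G V <->
   THT_temporal_safe_belief_set G (fun i p => V (i, false) p)).
Proof.
  intros _ Htot; split.
  - apply equilibrium_safe_belief_set.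
  - now apply safe_belief_set_equilibrium.
Qed.
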